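(* Let $d\ge 2$ and let $H$ be the class of decision trees of height at most $d$ over $\mathrm{dim}$-dimensional inputs in which nodes are permitted to test the same dimension as their ancestors. Then for any dataset of $n$ distinct points, the disagreement coefficient of $H$ satisfies $\theta=\Omega(n^{1/\mathrm{dim}})$.
   Context: A decision tree routes a point $x\in\mathbb{R}^{\mathrm{dim}}$ from the root; each internal node compares one coordinate $x_a$ with a threshold, each leaf carries a label in $\{0,1\}$. For a dataset $S$ of $n$ points: $D_S(h,h')=\frac1n\sum_{x\in S}\mathbb{I}(h(x)\ne h'(x))$, $B_H(h,r)=\{h'\in H:D_S(h,h')\le r\}$, $\mathrm{DIS}_S(V)=\{x\in S:\exists h_1,h_2\in V,h_1(x)\ne h_2(x)\}$, $\theta_h=\sup_{r>0}\frac{|\mathrm{DIS}_S(B_H(h,r))|}{rn}$, $\theta=\sup_{h\in H}\theta_h$. *)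

From HB Require Import structures.
From mathcomp Require Import all_boot all_order all_algebra.
From mathcomp Require Import all_classical all_reals all_analysis.
Set Implicit Arguments. Unset Strict Implicit. Unset Printing Implicit Defensive.
Import Order.TTheory GRing.Theory Num.Theory.
Local Open Scope classical_set_scope.
Local Open Scope ring_scope.

Section DT.
Variables (R : realType) (dim : nat).

Definition point := 'rV[R]_dim.

(* No restriction on which coordinates may be tested (repetition allowed). *)
Inductive dtree : Type :=
| Leaf of bool
| Node of 'I_dim & R & dtree & dtree.

Fixpoint dt_eval (T : dtree) (x : point) : bool :=
  match T with
  | Leaf b => b
  | Node a t l r => if x ord0 a <= t then dt_eval l x else dt_eval r x
  end.

Fixpoint dt_height (T : dtree) : nat :=
  match T with
  | Leaf _ => 0
  | Node _ _ l r => (maxn (dt_height l) (dt_height r)).+1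
  end.

Definition DT_class (d : nat) : set (point -> bool) :=
  [set f | exists T : dtree, (dt_height T <= d)%N /\ f = dt_eval T].

Variables (n : nat) (S : 'I_n -> point).

Definition DS (h h' : point -> bool) : R :=
  #|[set i : 'I_n | h (S i) != h' (S i)]|%:R / n%:R.

Definition ballH (H : set (point -> bool)) (h : point -> bool) (r : R)
  : set (point -> bool) := [set h' | H h' /\ DS h h' <= r].

Definition card_DIS (V : set (point -> bool)) : nat :=
  #|[set i : 'I_n | `[< exists h1 h2, V h1 /\ V h2 /\ h1 (S i) <> h2 (S i) >]]|.

Definition theta_h (H : set (point -> bool)) (h : point -> bool) : \bar R :=
  ereal_sup [set ((card_DIS (ballH H h r))%:R / (r * n%:R))%:E
            | r in [set r : R | 0 < r]].

Definition theta (H : set (point -> bool)) : \bar R :=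
  ereal_sup [set theta_h H h | h in H].

End DT.

(* Compare the constant classifier [false] with the height-2 trees testing
   x_a = v.  Such a tree lies in the ball of radius k/n around [false] as soon
   as at most k sample points share the coordinate value x_a = v, and it then
   disagrees with [false] at every one of them.  A sample point all of whose
   coordinate classes have more than k elements is determined, by injectivity,
   by one heavy class per coordinate; there are at most n/(k+1) heavy classes
   per coordinate, hence at most (n/(k+1))^dim such points.  With
   m = floor(n^(1/dim)) and k ~ 2n/m this is at most n/2, so at least n/2
   points lie in the disagreement region of a ball of radius r with r n = k,
   and theta >= (n/2)/k >= m/6 >= n^(1/dim)/12. *)

From HB Require Import structures.
From mathcomp Require Import all_boot all_order all_algebra.
From mathcomp Require Import all_classical all_reals all_analysis.
From mathcomp Require Import lra zify.
Set Implicit Arguments. Unset Strict Implicit. Unset Printing Implicit Defensive.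
Import Order.TTheory GRing.Theory Num.Theory.
Local Open Scope ring_scope.

Lemma exists_nat_root e n : (0 < e)%N -> (0 < n)%N ->
  exists2 m, (0 < m <= n)%N & (m ^ e <= n < m.+1 ^ e)%N.
Proof.
move=> e_gt0 n_gt0.
have root_ex : exists m, (m ^ e <= n)%N by exists 1%N; rewrite exp1n.
have root_le m : (m ^ e <= n)%N -> (m <= n)%N.
  case: m => // m; apply/leq_trans; rewrite -[X in (X <= _)%N]expn1.
  by rewrite leq_pexp2l.
case: (ex_maxnP root_ex root_le) => m m_le m_max.
exists m; last by rewrite m_le ltnNge; apply/negP => /m_max; rewrite ltnn.
by rewrite root_le // andbT; apply: m_max; rewrite exp1n.
Qed.

Lemma double_leq_of_pow_bounds e n m q B : (0 < e)%N -> (0 < n)%N ->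
  (B * q ^ e <= n ^ e)%N -> (m ^ e <= n)%N -> (2 * n <= q * m)%N ->
  (2 * B <= n)%N.
Proof.
move=> e_gt0 n_gt0 Bq_le m_le qm_ge.
have two_pow : (2 * n ^ e <= q ^ e * m ^ e)%N.
  rewrite -expnMn; apply: (@leq_trans ((2 * n) ^ e)); last by rewrite leq_exp2r.
  by rewrite expnMn leq_mul2r -[X in (X <= _)%N]expn1 leq_pexp2l ?orbT.
rewrite -(@leq_pmul2r (n ^ e)) ?expn_gt0 ?n_gt0 // -mulnA mulnCA.
apply: leq_trans (leq_mul (leqnn B) two_pow) _.
by rewrite mulnA [(n * _)%N]mulnC leq_mul.
Qed.

Lemma powR_invn_le (R : realType) (x y : R) e : (0 < e)%N ->
  0 <= x -> 0 <= y -> x <= y ^+ e -> x `^ e%:R^-1 <= y.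
Proof.
move=> e_gt0 x_ge0 y_ge0 x_le.
rewrite -[leRHS](_ : (y ^+ e) `^ e%:R^-1 = y); last first.
  by rewrite -powR_mulrn // -powRrM mulfV ?powRr1 // pnatr_eq0 -lt0n.
by apply: ge0_ler_powR; rewrite ?invr_ge0 ?nnegrE ?exprn_ge0.
Qed.

Section CoordinateClasses.
Variables (T : eqType) (dim n : nat) (S : 'I_n -> 'rV[T]_dim).

Definition coord_class (a : 'I_dim) (i : 'I_n) : {set 'I_n} :=
  [set j | S j ord0 a == S i ord0 a].

Lemma coord_class_eq a i j :
  (coord_class a i == coord_class a j) = (S i ord0 a == S j ord0 a).
Proof.
apply/eqP/eqP => [Eij|Eij]; last by apply/setP => x; rewrite !finset.inE Eij.
have : i \in coord_class a j by rewrite -Eij finset.inE.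
by rewrite finset.inE => /eqP.
Qed.

Variable k : nat.

Definition heavy (a : 'I_dim) : {set 'I_n} := [set i | k < #|coord_class a i|]%N.

Definition heavy_classes (a : 'I_dim) : {set {set 'I_n}} := coord_class a @: heavy a.

Definition heavy_points : {set 'I_n} := [set i | [forall a, i \in heavy a]].

Lemma card_heavy_classes a : (#|heavy_classes a| * k.+1 <= n)%N.
Proof.
rewrite -[X in (_ <= X)%N]card_ord; apply: leq_trans (max_card (heavy a)).
rewrite -[#|heavy a|]sum1_card (partition_big_imset (coord_class a)) /= -sum_nat_const.
apply: leq_sum => _ /imsetP [i heavy_i ->].
rewrite sum1dep_card; have := heavy_i; rewrite finset.inE => /leq_trans; apply.
apply/subset_leq_card/fintype.subsetP => j; rewrite finset.inE => Eji.
have /eqP Cji : coord_class a j == coord_class a i by rewrite coord_class_eq.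
by rewrite !finset.inE Cji eqxx andbT; rewrite finset.inE in heavy_i.
Qed.

Lemma card_heavy_points_le_prod :
  injective S -> (#|heavy_points| <= \prod_(a : 'I_dim) #|heavy_classes a|)%N.
Proof.
move=> injS.
pose classes i : {ffun 'I_dim -> {set 'I_n}} := [ffun a => coord_class a i].
have classes_inj : injective classes.
  move=> i j /ffunP Eij; apply/injS/rowP => a.
  by apply/eqP; rewrite -coord_class_eq; have := Eij a; rewrite !ffunE => ->.
rewrite -(card_imset _ classes_inj) -(cardsXn heavy_classes).
apply/subset_leq_card/fintype.subsetP => _ /imsetP [i heavy_pt_i ->].
apply/setXnP => a; rewrite ffunE; apply: imset_f.
by rewrite finset.inE in heavy_pt_i; move/forallP: heavy_pt_i.
Qed.

Lemma card_heavy_points :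
  injective S -> (#|heavy_points| * k.+1 ^ dim <= n ^ dim)%N.
Proof.
move=> injS; rewrite -(card_ord dim) -!prod_nat_const.
apply: leq_trans (leq_mul (card_heavy_points_le_prod injS) (leqnn _)) _.
by rewrite -big_split /=; apply: leq_prod => a _; exact: card_heavy_classes.
Qed.

End CoordinateClasses.

Section DisagreementLowerBound.
Variables (R : realType) (dim n : nat) (S : 'I_n -> 'rV[R]_dim).

Lemma DIS_ratio_le_theta (H : set ('rV[R]_dim -> bool)) h r : H h -> 0 < r ->
  (((card_DIS S (ballH S H h r))%:R / (r * n%:R))%:E <= theta S H)%E.
Proof.
move=> Hh r_gt0; apply: (@le_trans _ _ (theta_h S H h)).
  by apply: ereal_sup_ubound; exists r.
by apply: ereal_sup_ubound; exists h.
Qed.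

(* The threshold [t] is the largest sample coordinate below [v], so no sample
   coordinate lies in the gap between [t] and [v]. *)
Lemma coord_eq_tree (a : 'I_dim) (v : R) : exists T : dtree R dim,
  dt_height T = 2%N /\ forall j, dt_eval T (S j) = (S j ord0 a == v).
Proof.
pose t := \big[Order.Def.max/(v - 1)]_(j | S j ord0 a < v) S j ord0 a.
have t_lt : t < v by apply: bigmax_lt => //; lra.
have t_ge j : S j ord0 a < v -> S j ord0 a <= t.
  exact: (le_bigmax_cond _ (fun j => S j ord0 a)).
exists (Node a v (Node a t (Leaf R dim false) (Leaf R dim true)) (Leaf R dim false)).
split=> // j /=; case: (ltgtP (S j ord0 a) v) => [Sj_lt|//|->].
- by rewrite t_ge.
- by rewrite leNgt t_lt.
Qed.

Lemma DS_leaf_false (h : 'rV[R]_dim -> bool) :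
  DS S (dt_eval (Leaf R dim false)) h = #|[set i | h (S i)]|%:R / n%:R.
Proof.
rewrite /DS; congr (_%:R / _); apply: eq_card => i.
by rewrite unfold_in /in_set /= asboolb finset.inE; case: (h (S i)).
Qed.

Lemma card_DIS_ball_leaf_false d k : (2 <= d)%N ->
  (n - #|heavy_points S k| <=
   card_DIS S (ballH S (DT_class d) (dt_eval (Leaf R dim false)) (k%:R / n%:R)))%N.
Proof.
move=> d_ge2; rewrite -{1}(card_ord n) -(cardsC (heavy_points S k)) addKn.
apply/subset_leq_card/fintype.subsetP => i.
rewrite !finset.inE negb_forall => /existsP [a]; rewrite finset.inE -leqNgt => light_i.
have [T [T_height T_eval]] := coord_eq_tree a (S i ord0 a).
rewrite in_setE /=; apply/asboolP.
exists (dt_eval (Leaf R dim false)), (dt_eval T); split; [|split].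
- split; first by exists (Leaf R dim false).
  by rewrite DS_leaf_false eq_card0 ?mul0r // => j; rewrite finset.inE.
- split; first by exists T; rewrite T_height.
  rewrite DS_leaf_false ler_wpM2r ?invr_ge0 // ler_nat.
  by apply: leq_trans light_i; apply/subset_leq_card/fintype.subsetP => j;
    rewrite !finset.inE T_eval.
- by rewrite /= T_eval eqxx.
Qed.

End DisagreementLowerBound.

Theorem theorem3 (R : realType) (dim d : nat) :
  (1 <= dim)%N -> (2 <= d)%N ->
  exists2 c : R, 0 < c &
    forall (n : nat) (S : 'I_n -> 'rV[R]_dim),
      (0 < n)%N -> injective S ->
      ((c * (n%:R `^ (dim%:R)^-1))%:E <= @theta R dim n S (@DT_class R dim d))%E.
Proof.
move=> dim_gt0 d_ge2; exists 12%:R^-1 => // n S n_gt0 injS.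
have [m /andP [m_gt0 m_le_n] /andP [m_le n_lt]] := exists_nat_root dim_gt0 n_gt0.
set k := (2 * (n %/ m)).+1.
have km_le : (k * m <= 3 * n)%N by have := leq_divM n m; rewrite /k; nia.
have km_ge : (2 * n <= k.+1 * m)%N by have := ltn_ceil n m_gt0; rewrite /k; nia.
have heavy_half : (2 * #|heavy_points S k| <= n)%N.
  exact: double_leq_of_pow_bounds dim_gt0 n_gt0 (card_heavy_points k injS) m_le km_ge.
have DIS_ge := card_DIS_ball_leaf_false S k d_ge2.
apply: le_trans (DIS_ratio_le_theta S (r := k%:R / n%:R) _ _); last 2 first.
- by exists (Leaf R dim false).
- by rewrite divr_gt0 ?ltr0n.
set D := card_DIS _ _ in DIS_ge *.
rewrite lee_fin divfK ?pnatr_eq0 -?lt0n // ler_pdivlMr ?ltr0n //.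
have n_le_2D : n%:R <= 2 * D%:R :> R by rewrite -natrM ler_nat; lia.
have km_le' : k%:R * m%:R <= 3 * n%:R :> R by rewrite -!natrM ler_nat.
have root_le : n%:R `^ dim%:R^-1 <= m%:R + 1 :> R.
  by rewrite powR_invn_le // natr1 -natrX ler_nat ltnW.
have x_ge0 := powR_ge0 (n%:R : R) dim%:R^-1.
have m_ge1 : 1 <= m%:R :> R by rewrite ler1n.
have k_ge0 : 0 <= k%:R :> R by [].
set x := n%:R `^ _ in root_le x_ge0 *.
nra.
Qed.
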